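(* Let $n\ge 0$ and $k$ be integers, $\rho\ne0$ real and $0\le q<1$. Writing $B_{n,\rho,q}^{(k)}=B_{n,\rho,q}^{(k)}(0)$, we have $$B_{n,\rho,q}^{(k)}=\sum_{m=0}^n S_2(n,m)\frac{(-\rho)^{n-m}\,m!}{[m+1]_q^k},$$ where $S_2(n,m)$ are the Stirling numbers of the second kind.
   Context: For real $0\le q<1$ (with $0^0=1$), $[x]_q=\frac{1-q^x}{1-q}$. ${\rm Li}_{k,q}(w)=\sum_{m\ge1} w^m/[m]_q^k$. The $q$-poly-Bernoulli polynomials with parameter $\rho$ are defined by the formal power series identity in $t$: $\frac{\rho}{1-e^{-\rho t}}{\rm Li}_{k,q}\left(\frac{1-e^{-\rho t}}{\rho}\right)e^{-tz}=\sum_{n\ge0} B_{n,\rho,q}^{(k)}(z)\frac{t^n}{n!}$. *)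

From Stdlib Require Import Reals List ZArith.
Import ListNotations.
Open Scope R_scope.

Fixpoint sumR (n : nat) (f : nat -> R) : R :=
  match n with
  | O => 0
  | S n' => sumR n' f + f n'
  end.

Definition qnum (q : R) (x : nat) : R := (1 - q ^ x) / (1 - q).

Fixpoint S2 (n m : nat) : nat :=
  match n, m with
  | O, O => 1%nat
  | O, S _ => 0%nat
  | S _, O => 0%nat
  | S n', S m' => (S m' * S2 n' (S m') + S2 n' m')%nat
  end.

Definition ser := nat -> R.
Definition sone : ser := fun n => match n with O => 1 | _ => 0 end.
Definition smul (a b : ser) : ser :=
  fun n => sumR (S n) (fun i => a i * b (n - i)%nat).
Fixpoint spow (a : ser) (m : nat) : ser :=
  match m with O => sone | S m' => smul a (spow a m') end.
Definition sexp (c : R) : ser := fun n => c ^ n / INR (fact n).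
(* composition sum_m c_m w(t)^m, for w with zero constant term
   (only m <= n contribute to the coefficient of t^n) *)
Definition scomp (c : nat -> R) (w : ser) : ser :=
  fun n => sumR (S n) (fun m => c m * spow w m n).
(* division by t of a series with zero constant term *)
Definition sshift (a : ser) : ser := fun n => a (S n).
(* multiplicative inverse of a series with nonzero constant term *)
Fixpoint sinv_list (a : ser) (n : nat) : list R :=
  match n with
  | O => [/ a O]
  | S n' => let l := sinv_list a n' in
            l ++ [- / a O * sumR n (fun i => a (S i) * nth (n' - i)%nat l 0)]
  end.
Definition sinv (a : ser) : ser := fun n => nth n (sinv_list a n) 0.

(* Li_{k,q}(w) = sum_{m>=1} w^m / [m]_q^k, k an integer *)
Definition Li_coef (k : Z) (q : R) (m : nat) : R :=
  match m with O => 0 | _ => / powerRZ (qnum q m) k end.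
Definition Li_ser (k : Z) (q : R) (w : ser) : ser := scomp (Li_coef k q) w.

Definition wser (rho : R) : ser := fun n => (sone n - sexp (- rho) n) / rho.

(* The generating function  rho/(1-e^{-rho t}) Li_{k,q}(w(t)) e^{-t z}.
   Since w(t) = t * (w(t)/t) with w(t)/t having constant term 1, and
   Li(w) has zero constant term, the (a priori Laurent) product equals
   (w/t)^{-1} * (Li(w)/t) * e^{-tz}, a genuine power series. *)
Definition qPB_gen (k : Z) (rho q z : R) : ser :=
  smul (smul (sinv (sshift (wser rho))) (sshift (Li_ser k q (wser rho))))
       (sexp (- z)).

Definition qPB (n : nat) (k : Z) (rho q z : R) : R :=
  INR (fact n) * qPB_gen k rho q z n.

(* Let w(t) = (1 - e^{-rho t})/rho. From w' = 1 - rho w one gets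
   (w^{m+1})' = (m+1) w^m (1 - rho w), a recurrence on the coefficients of
   w^m which is the Stirling recurrence in disguise:
   n! [t^n] w^m = S2(n,m) (-rho)^{n-m} m!.  Moreover
   Li_{k,q}(w)/t = (w/t) * sum_m w^m/[m+1]_q^k, so the factor (w/t)^{-1} of
   the generating function cancels, and at z = 0 the exponential is 1. *)

From Stdlib Require Import Reals ZArith List FunctionalExtensionality.
From mathcomp Require Import all_boot all_algebra ring zify.
From mathcomp Require Import Rstruct.
Import GRing.Theory Num.Theory.
Local Open Scope ring_scope.

Lemma sumR_big n f : sumR n f = \sum_(i < n) f i.
Proof. by elim: n => [|n IH] /=; rewrite ?big_ord0 // big_ord_recr /= IH. Qed.

Lemma smulE a b n : smul a b n = \sum_(i < n.+1) a i * b (n - i)%N.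
Proof. by rewrite /smul sumR_big. Qed.

(* Coefficients below [N] of a product only see the truncations at [N],
   so the ring laws of series are inherited from [{poly R}]. *)
Definition ser_poly N (a : ser) : {poly R} := \poly_(i < N) a i.

Lemma coef_ser_poly N a i : (i < N)%N -> (ser_poly N a)`_i = a i.
Proof. by move=> lt_iN; rewrite coef_poly lt_iN. Qed.

Lemma smul_polyE N a b n :
  (n < N)%N -> smul a b n = (ser_poly N a * ser_poly N b)`_n.
Proof.
move=> lt_nN; rewrite smulE coefM; apply: eq_bigr => i _.
have lt_in := ltn_ord i; rewrite !coef_ser_poly //; lia.
Qed.

Lemma smulC a b : smul a b = smul b a.
Proof.
by apply: functional_extensionality => n; rewrite !(smul_polyE n.+1) // mulrC.
Qed.

Lemma smulA a b c : smul (smul a b) c = smul a (smul b c).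
Proof.
apply: functional_extensionality => n.
transitivity (((ser_poly n.+1 a * ser_poly n.+1 b) * ser_poly n.+1 c)`_n).
  rewrite smulE coefM; apply: eq_bigr => i _.
  have lt_in := ltn_ord i; rewrite (smul_polyE n.+1) ?coef_ser_poly //; lia.
rewrite -mulrA smulE coefM; apply: eq_bigr => i _.
have lt_in := ltn_ord i.
rewrite [X in _ = _ * X](smul_polyE n.+1) ?coef_ser_poly //; lia.
Qed.

Lemma smul1l a : smul sone a = a.
Proof.
apply: functional_extensionality => n.
rewrite smulE big_ord_recl big1 => [|i _] /=; last by rewrite mul0r.
by rewrite subn0 addr0 mul1r.
Qed.

Lemma smul1r a : smul a sone = a.
Proof. by rewrite smulC smul1l. Qed.

Definition sadd (a b : ser) : ser := fun n => a n + b n.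
Definition sscal (r : R) (a : ser) : ser := fun n => r * a n.
Definition sder (a : ser) : ser := fun n => n.+1%:R * a n.+1.

Lemma smulDr a b c : smul a (sadd b c) = sadd (smul a b) (smul a c).
Proof.
apply: functional_extensionality => n.
by rewrite /sadd !smulE -big_split; apply: eq_bigr => i _; rewrite mulrDr.
Qed.

Lemma smulZr a r b : smul a (sscal r b) = sscal r (smul a b).
Proof.
apply: functional_extensionality => n.
by rewrite /sscal !smulE mulr_sumr; apply: eq_bigr => i _; rewrite mulrCA.
Qed.

Lemma smul_sshift a b n : a 0%N = 0 -> smul a b n.+1 = smul (sshift a) b n.
Proof.
move=> a0; rewrite !smulE big_ord_recl a0 mul0r add0r.
by apply: eq_bigr => i _ /=; rewrite subSS.
Qed.

Lemma sder_smul a b :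
  sder (smul a b) = sadd (smul (sder a) b) (smul a (sder b)).
Proof.
apply: functional_extensionality => n.
rewrite /sadd /sder !smulE mulr_sumr.
transitivity (\sum_(i < n.+2) (i%:R * (a i * b (n.+1 - i)%N))
            + \sum_(i < n.+2) ((n.+1 - i)%:R * (a i * b (n.+1 - i)%N))).
  rewrite -big_split /=; apply: eq_bigr => i _.
  have lt_in := ltn_ord i; rewrite -mulrDl -natrD.
  congr (_%:R * _); lia.
congr (_ + _).
  rewrite big_ord_recl /= mul0r add0r; apply: eq_bigr => i _ /=.
  rewrite subSS /bump /=; ring.
rewrite big_ord_recr /= subnn mul0r addr0; apply: eq_bigr => i _ /=.
have lt_in := ltn_ord i.
have -> : (n.+1 - i = (n - i).+1)%N by lia.
ring.
Qed.

Lemma sder_spow w m :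
  sder (spow w m.+1) = sscal m.+1%:R (smul (spow w m) (sder w)).
Proof.
elim: m => [|m IH].
  rewrite /= smul1r smul1l.
  by apply: functional_extensionality => n; rewrite /sscal mul1r.
rewrite [spow w m.+2]/= sder_smul IH smulZr -(smulA w (spow w m)) -/(spow w m.+1).
rewrite (smulC (sder w) (spow w m.+1)).
apply: functional_extensionality => n; rewrite /sadd /sscal.
rewrite -[(m.+2)%:R]/((m.+1).+1%:R) mulrS; ring.
Qed.

Lemma spow_coef_lt w m j : w 0%N = 0 -> (j < m)%N -> spow w m j = 0.
Proof.
move=> w0; elim: m j => [|m IH] j lt_jm //=.
rewrite smulE big1 // => -[[|i] lt_ij] _ /=; first by rewrite w0 mul0r.
rewrite IH ?mulr0 //; lia.
Qed.

Lemma size_sinv_list a n : length (sinv_list a n) = n.+1.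
Proof. by elim: n => [|n IH] //=; rewrite length_app IH /=; lia. Qed.

Lemma nth_sinv_list a n j :
  (j <= n)%N -> List.nth j (sinv_list a n) 0 = sinv a j.
Proof.
elim: n j => [|n IH] j le_jn; first by have -> : j = 0%N by lia.
case: (ltnP j n.+1) => [lt_jn1 | le_n1j]; last by have -> : j = n.+1 by lia.
rewrite /= app_nth1; first exact: IH.
rewrite size_sinv_list; lia.
Qed.

Lemma sinvS a n :
  sinv a n.+1 = - (a 0%N)^-1 * \sum_(i < n.+1) a i.+1 * sinv a (n - i)%N.
Proof.
rewrite {1}/sinv; cbn [sinv_list].
rewrite app_nth2 size_sinv_list // Nat.sub_diag sumR_big.
congr (_ * _); apply: eq_bigr => i _; rewrite nth_sinv_list //; lia.
Qed.

Lemma smul_sinv a : a 0%N <> 0 -> smul a (sinv a) = sone.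
Proof.
move=> /eqP a0; apply: functional_extensionality => -[|n].
  by rewrite smulE big_ord1 /= /sinv /= mulfV.
rewrite smulE big_ord_recl sinvS /=.
rewrite [X in _ + X](eq_bigr (fun i : 'I_n.+1 => a i.+1 * sinv a (n - i)%N)).
  by rewrite R0E; field; exact: a0.
by move=> i _; rewrite /bump /= subSS.
Qed.

Lemma sexpN0 : sexp (- 0) = sone.
Proof.
apply: functional_extensionality => -[|n]; rewrite /sexp /= !RealsE.
  by rewrite invr1 mulr1.
by rewrite oppr0 !mul0r.
Qed.

Lemma S2_gt n m : (n < m)%N -> S2 n m = 0%N.
Proof. by elim: n m => [|n IH] [|m] lt_nm //=; rewrite !IH //; lia. Qed.

Lemma sum_widen (F : nat -> R) p N :
  (p < N)%N -> (forall m, (p < m)%N -> F m = 0) ->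
  \sum_(m < p.+1) F m = \sum_(m < N) F m.
Proof.
move=> lt_pN F0.
rewrite -(big_mkord xpredT) -(big_mkord xpredT F).
rewrite (@big_cat_nat _ _ _ p.+1 0 N _ _ (leq0n _) lt_pN) /=.
rewrite [X in _ = _ + X]big1_seq ?addr0 // => m /andP[_].
by rewrite mem_index_iota => /andP[lt_pm _]; apply: F0.
Qed.

Section Wser.

Variable rho : R.
Hypothesis rho_neq0 : rho <> 0.

Let w := wser rho.

Lemma wser0 : w 0%N = 0.
Proof.
by rewrite /w /wser /sexp /= !RealsE; field; apply/eqP.
Qed.

Lemma sshift_wser0 : sshift w 0%N = 1.
Proof.
by rewrite /w /sshift /wser /sexp /sone /= !RealsE; field; apply/eqP.
Qed.

Lemma sder_wser : sder w = sadd sone (sscal (- rho) w).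
Proof.
apply: functional_extensionality => n.
rewrite /w /sder /sadd /sscal /wser /sexp !RealsE [sone n.+1]/= R0E.
rewrite factS natrM exprS.
have fact_neq0 : (n`!)%:R != 0 :> R by rewrite pnatr_eq0 -lt0n fact_gt0.
have n1_neq0 : (n.+1)%:R != 0 :> R by rewrite pnatr_eq0.
field; apply/and3P; split=> //; first exact/eqP.
by rewrite addrC natr1.
Qed.

Lemma spow_wser_rec m n :
  n.+1%:R * spow w m.+1 n.+1 = m.+1%:R * (spow w m n - rho * spow w m.+1 n).
Proof.
have := congr1 (fun f => f n) (sder_spow w m).
rewrite sder_wser smulDr smul1r smulZr (smulC _ w) -/(spow w m.+1).
by rewrite /sder /sscal /sadd mulNr => ->.
Qed.

Lemma spow_wser_coef m n :
  spow w m n * (n`!)%:R = (S2 n m)%:R * (- rho) ^+ (n - m) * (m`!)%:R.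
Proof.
elim: m n => [|m IHm] n.
  by case: n => [|n] /=; rewrite ?subn0 ?mul1r // R0E !mul0r.
elim: n => [|n IHn]; first by rewrite spow_coef_lt ?wser0 // mul0r /= !mul0r.
have -> : spow w m.+1 n.+1 * (n.+1)`!%:R = m.+1%:R * (spow w m n * n`!%:R)
      - m.+1%:R * rho * (spow w m.+1 n * n`!%:R).
  rewrite factS natrM.
  transitivity ((n.+1%:R * spow w m.+1 n.+1) * n`!%:R); first ring.
  rewrite spow_wser_rec; ring.
rewrite IHm IHn.
rewrite -[S2 n.+1 m.+1]/(m.+1 * S2 n m.+1 + S2 n m)%N subSS natrD natrM factS natrM.
case: (ltnP m n) => [lt_mn | le_nm].
  have -> : (n - m = (n - m.+1).+1)%N by lia.
  rewrite exprS; ring.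
rewrite (S2_gt n m.+1); last lia.
ring.
Qed.

Definition Li_tail k q : ser :=
  fun n => \sum_(m < n.+1) (powerRZ (qnum q m.+1) k)^-1 * spow w m n.

Lemma sshift_Li_ser k q : sshift (Li_ser k q w) = smul (sshift w) (Li_tail k q).
Proof.
apply: functional_extensionality => n.
set c := fun m => (powerRZ (qnum q m.+1) k)^-1.
rewrite /sshift /Li_ser /scomp sumR_big big_ord_recl.
rewrite ?RmultE ?RplusE mul0r add0r smulE /Li_tail -/c.
transitivity (\sum_(i < n.+1) \sum_(j < n.+1) c i * (sshift w j * spow w i (n - j)%N)).
  apply: eq_bigr => i _.
  by rewrite /bump /= smul_sshift ?wser0 // smulE /bump /= !RealsE mulr_sumr.
rewrite exchange_big /=; apply: eq_bigr => j _.
rewrite (@sum_widen (fun m => c m * spow w m (n - j)%N) (n - j) n.+1); first 1 last.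
- by lia.
- by move=> m lt_m; rewrite spow_coef_lt ?wser0 ?mulr0.
by rewrite mulr_sumr; apply: eq_bigr => i _; rewrite mulrCA.
Qed.

End Wser.

(* ssrnat's [m - n] is [subn]; the theorem is stated with [Nat.sub]. *)
Local Notation "x - y" := (Nat.sub x y) : nat_scope.
Open Scope R_scope.

Theorem corollary1 (n : nat) (k : Z) (rho q : R) :
  rho <> 0 -> 0 <= q < 1 ->
  qPB n k rho q 0 =
  sumR (S n) (fun m => INR (S2 n m) * (- rho) ^ (n - m) * INR (fact m)
                       / powerRZ (qnum q (S m)) k).
Proof.
move=> rho_neq0 _.
rewrite /qPB /qPB_gen sexpN0 smul1r sshift_Li_ser // -smulA (smulC (sinv _)).
rewrite smul_sinv; last by rewrite sshift_wser0 //; exact: R1_neq_R0.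
rewrite smul1l sumR_big /Li_tail !RealsE mulr_sumr.
apply: eq_bigr => m _.
by rewrite !RealsE minusE -spow_wser_coef // mulrCA [RHS]mulrC (mulrC n`!%:R).
Qed.
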